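(* Let $m\ge1$, $n=2m$, and let $\mathcal{S}_m\subset\mathcal{S}_n\subset\mathcal{T}$ be nested subsets of the training set of sizes $m$ and $n$, with regularized empirical risks $R_m,R_n$ and minimizers $\mathbf{w}_m^*,\mathbf{w}_n^*$. Let $\mathbf{w}_m$ satisfy $\mathbb{E}[R_m(\mathbf{w}_m)-R_m(\mathbf{w}_m^* )]\le V_m$. Let an iterative descent method (deterministic or stochastic) be applied to $R_n$ which is linearly convergent with factor $0\le\rho_n<1$, i.e., for any initial point $\mathbf{u}_0$, its iterate $\mathbf{u}_s$ after $s$ iterations satisfies $\mathbb{E}[R_n(\mathbf{u}_s)-R_n(\mathbf{w}_n^* )]\le\rho_n^{s}\,(R_n(\mathbf{u}_0)-R_n(\mathbf{w}_n^* ))$ (expectation over the method's internal randomness). Let $\mathbf{w}_n$ be the output of $s_n$ iterations of this method started at $\mathbf{w}_m$. If $$s_n\ \ge\ -\frac{\log\left[3\cdot 2^\alpha+(2^\alpha-1)\left(2+\frac{c}{2}\|\mathbf{w}^*\|^2\right)\right]}{\log\rho_n},$$ then $\mathbb{E}[R_n(\mathbf{w}_n)-R_n(\mathbf{w}_n^* )]\le V_n$.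
   Context: Let $Z$ be a random variable with distribution $P$ on a space $\mathcal{Z}$ and $f:\mathbb{R}^p\times\mathcal{Z}\to\mathbb{R}$ a loss function. The expected loss is $L(\mathbf{w})=\mathbb{E}_Z[f(\mathbf{w},Z)]$ and $\mathbf{w}^*$ denotes a minimizer of $L$. The training set $\mathcal{T}=\{z_1,\dots,z_N\}$ consists of $N$ independent samples from $P$. For a (fixed, data-independent) subset $\mathcal{S}\subseteq\mathcal{T}$ with $k$ elements, the empirical loss is $L_{\mathcal{S}}(\mathbf{w})=\frac1k\sum_{z\in\mathcal{S}}f(\mathbf{w},z)$; for the sets $\mathcal{S}_k$ we write $L_k=L_{\mathcal{S}_k}$. Statistical accuracy: $V_k=\gamma/k^\alpha$ with constants $\gamma>0$ and $\alpha\in[0.5,1]$, and it is assumed that for every $k$ and every set $\mathcal{S}$ of $k$ independent samples from $P$, $\mathbb{E}[\sup_{\mathbf{w}\in\mathbb{R}^p}|L(\mathbf{w})-L_{\mathcal{S}}(\mathbf{w})|]\le V_k$ (expectation over the samples). For a constant $c>0$ the regularized empirical risk is $R_k(\mathbf{w})=L_k(\mathbf{w})+\frac{cV_k}{2}\|\mathbf{w}\|^2$, with minimizer $\mathbf{w}_k^*$. Assumption: for every $z$, $f(\cdot,z)$ is convex with $M$-Lipschitz continuous gradient. In the conclusion the expectation is over the training samples and the randomness of the method. *)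

From HB Require Import structures.
From mathcomp Require Import all_ssreflect_compat ssralg ssrnum ssrint poly matrix.
From mathcomp Require Import interval archimedean finmap interval_inference.
From mathcomp Require Import boolp classical_sets functions cardinality fsbigop.
From mathcomp Require Import reals ereal topology normedtype sequences measure.
From mathcomp Require Import exp numfun realfun measurable_realfun derive.
From mathcomp Require Import lebesgue_measure lebesgue_integral probability.
Import Order.TTheory GRing.Theory Num.Def Num.Theory.
Import numFieldNormedType.Exports.
Set Implicit Arguments. Unset Strict Implicit. Unset Printing Implicit Defensive.
Local Open Scope classical_set_scope.
Local Open Scope ring_scope.

Section Defs.
Context {R : realType} {p : nat}.

Definition sqnorm (w : 'rV[R]_p) : R := \sum_(i < p) (w ord0 i) ^+ 2.
Definition enorm (w : 'rV[R]_p) : R := Num.sqrt (sqnorm w).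

Definition convex_fun (g : 'rV[R]_p -> R) : Prop :=
  forall (x y : 'rV[R]_p) (t : R), 0 <= t <= 1 ->
    g ((1 - t) *: x + t *: y) <= (1 - t) * g x + t * g y.

Definition grad (g : 'rV[R]_p -> R) (x : 'rV[R]_p) : 'rV[R]_p :=
  \row_(i < p) ('d g x (delta_mx ord0 i : 'rV[R]_p)).

Definition lipschitz_grad (M : R) (g : 'rV[R]_p -> R) : Prop :=
  (forall x, differentiable g x) /\
  (forall x y, enorm (grad g x - grad g y) <= M * enorm (x - y)).

Definition stat_acc (gamma alpha : R) (k : nat) : R :=
  gamma / ((k%:R : R) `^ alpha).

Context {dZ : measure_display} {Z : measurableType dZ}.

Definition exp_loss (PZ : probability Z R) (f : 'rV[R]_p -> Z -> R)
  (w : 'rV[R]_p) : R := fine (\int[PZ]_x (f w x)%:E).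

Context {N : nat}.

Definition emp_loss (f : 'rV[R]_p -> Z -> R) (S : {set 'I_N})
  (D : 'I_N -> Z) (w : 'rV[R]_p) : R :=
  (#|S|%:R)^-1 * \sum_(i in S) f w (D i).

Definition reg_risk (gamma alpha c : R) (f : 'rV[R]_p -> Z -> R)
  (S : {set 'I_N}) (D : 'I_N -> Z) (w : 'rV[R]_p) : R :=
  emp_loss f S D w + c * stat_acc gamma alpha #|S| / 2 * sqnorm w.

Definition sup_dev (PZ : probability Z R) (f : 'rV[R]_p -> Z -> R)
  (S : {set 'I_N}) (D : 'I_N -> Z) : \bar R :=
  ereal_sup [set (`|exp_loss PZ f w - emp_loss f S D w|)%:E | w in [set: 'rV[R]_p]].

End Defs.

Definition sample {T Z : Type} {N : nat} (z : 'I_N -> T -> Z) (o : T) : 'I_N -> Z :=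
  fun i => z i o.

From HB Require Import structures.
From mathcomp Require Import all_ssreflect_compat ssralg ssrnum ssrint poly matrix.
From mathcomp Require Import interval archimedean finmap interval_inference.
From mathcomp Require Import boolp classical_sets functions cardinality fsbigop.
From mathcomp Require Import reals ereal topology normedtype sequences measure.
From mathcomp Require Import exp numfun realfun measurable_realfun derive.
From mathcomp Require Import lebesgue_measure lebesgue_integral probability.
From mathcomp Require Import ring lra.
Import Order.TTheory GRing.Theory Num.Def Num.Theory.
Import numFieldNormedType.Exports.
Local Open Scope classical_set_scope.
Local Open Scope ring_scope.

(* Write R_n = L_n + κ‖·‖² and R_m = L_m + 2^α κ‖·‖² with κ = c V_n / 2, and
   L_n = (L_m + L_T) / 2, where T = S_n \ S_m has m elements like S_m. Comparing R_n
   with R_m at w_m and at w_n⋆, and using that w_m⋆ minimizes R_m, gives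
     R_n(w_m) - R_n(w_n⋆) ≤ [R_m(w_m) - R_m(w_m⋆)] + sup|L - L_m| + sup|L - L_T|
                            + (2^α - 1) (2 sup|L - L_n| + κ‖w⋆‖²),
   where the surplus regularization (2^α - 1) κ‖w_n⋆‖² of R_m is controlled through
   R_n(w_n⋆) ≤ R_n(w⋆) and L(w⋆) ≤ L(w_n⋆). In expectation the right-hand side is at
   most K V_n with K = 3·2^α + (2^α - 1)(2 + c‖w⋆‖²/2), and the choice of s_n makes
   ρ_n^s_n K ≤ 1. *)

Section warm_start_gap.
Context {R : realFieldType} {W : Type} {L Lm Lt q Rm Rn : W -> R} {kappa a : R}.
Hypotheses (kappa_ge0 : 0 <= kappa) (a_ge1 : 1 <= a) (q_ge0 : forall w, 0 <= q w).
Hypothesis RnE : forall w, Rn w = (Lm w + Lt w) / 2 + kappa * q w.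
Hypothesis RmE : forall w, Rm w = Lm w + a * kappa * q w.

Lemma regularizer_le_dev y w0 C :
  Rn y <= Rn w0 -> L w0 <= L y ->
  `|L w0 - (Lm w0 + Lt w0) / 2| <= C -> `|L y - (Lm y + Lt y) / 2| <= C ->
  kappa * q y <= 2 * C + kappa * q w0.
Proof. by rewrite !RnE => ? ? /ler_normlP[? ?] /ler_normlP[? ?]; lra. Qed.

Lemma warm_start_gap x y z w0 A B C :
  Rm z <= Rm y -> Rn y <= Rn w0 -> L w0 <= L y ->
  `|L x - Lm x| <= A -> `|L y - Lm y| <= A ->
  `|L x - Lt x| <= B -> `|L y - Lt y| <= B ->
  `|L w0 - (Lm w0 + Lt w0) / 2| <= C -> `|L y - (Lm y + Lt y) / 2| <= C ->
  Rn x - Rn y <= (Rm x - Rm z) + (A + B) + (a - 1) * (2 * C + kappa * q w0).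
Proof.
move=> zmin ymin w0min /ler_normlP[? ?] /ler_normlP[? ?] /ler_normlP[? ?]
  /ler_normlP[? ?] Cw0 Cy.
have reg_y : (a - 1) * (kappa * q y) <= (a - 1) * (2 * C + kappa * q w0).
  by apply: ler_wpM2l; [rewrite subr_ge0 | exact: regularizer_le_dev Cw0 Cy].
have reg_x : 0 <= (a - 1) * (kappa * q x) by rewrite !mulr_ge0 ?subr_ge0.
by move: zmin; rewrite !RnE !RmE; lra.
Qed.

End warm_start_gap.

Section nonnegative_integrals.
Context {d : measure_display} {T : measurableType d} {R : realType}.
Variable mu : {measure set T -> \bar R}.
Local Open Scope ereal_scope.

(* Unlike [ge0_le_integral], no measurability is needed, as a nonnegative integral is
   the supremum of the integrals of the simple functions below the integrand. The
   inner integral over the method's randomness is not known to be measurable. *)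
Lemma ge0_le_integralT (f g : T -> \bar R) :
  (forall x, 0 <= f x) -> (forall x, f x <= g x) ->
  \int[mu]_x f x <= \int[mu]_x g x.
Proof.
move=> f0 fg; have g0 x : 0 <= g x by exact: le_trans (f0 x) (fg x).
rewrite !ge0_integralTE//; apply: ge_ereal_sup => _ [h /= hf <-].
by apply: ereal_sup_ubound; exists h => //= x; exact: le_trans (hf x) (fg x).
Qed.

Lemma ge0_integralD_le (f g : T -> \bar R) (a b : \bar R) :
  (forall x, 0 <= f x) -> measurable_fun setT f ->
  (forall x, 0 <= g x) -> measurable_fun setT g ->
  \int[mu]_x f x <= a -> \int[mu]_x g x <= b ->
  \int[mu]_x (f x + g x) <= a + b.
Proof. by move=> f0 mf g0 mg fa gb; rewrite ge0_integralD//; exact: leeD. Qed.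

Lemma ge0_integralZl_le (k : R) (f : T -> \bar R) (a : \bar R) :
  (0 <= k)%R -> (forall x, 0 <= f x) -> measurable_fun setT f ->
  \int[mu]_x f x <= a -> \int[mu]_x (k%:E * f x) <= k%:E * a.
Proof.
by move=> k0 f0 mf fa; rewrite ge0_integralZl// ?lee_fin//; exact: lee_wpmul2l.
Qed.

End nonnegative_integrals.

Lemma powR_ge1 {R : realType} (a r : R) : 1 <= a -> 0 <= r -> 1 <= a `^ r.
Proof. by move=> a_ge1 r_ge0; rewrite -(powRr0 a) ler_powR. Qed.

Lemma expr_mul_le1 {R : realType} (rho K : R) (s : nat) :
  0 <= rho < 1 -> (0 < s)%N -> 0 < K -> - ln K / ln rho <= s%:R ->
  rho ^+ s * K <= 1.
Proof.
move=> /andP[rho_ge0 rho_lt1] s_gt0 K_gt0 s_ge.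
have [->|rho_neq0] := eqVneq rho 0; first by rewrite expr0n gtn_eqF // mul0r.
have rho_gt0 : 0 < rho by rewrite lt_neqAle eq_sym rho_neq0.
have ln_rho_lt0 : ln rho < 0 by rewrite ln_lt0 // rho_gt0.
have s_ln : s%:R * ln rho <= - ln K.
  by have := ler_wnM2r (ltW ln_rho_lt0) s_ge; rewrite divfK ?lt_eqF.
have -> : rho ^+ s = expR (s%:R * ln rho).
  by rewrite -powR_mulrn ?ltW // /powR gt_eqF.
rewrite -ler_pdivlMr // div1r -(lnK (K_gt0 : K \in Num.pos)) -expRN.
by rewrite ler_expR.
Qed.

Lemma card_setD_double {T : finType} {A B : {set T}} :
  A \subset B -> #|B| = (2 * #|A|)%N -> #|B :\: A| = #|A|.
Proof. by move=> AB cardB; rewrite cardsDS // cardB mul2n -addnn addnK. Qed.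

Section regularized_risk.
Context {R : realType} {p : nat} {dZ : measure_display} {Z : measurableType dZ}.
Context {N : nat}.
Variables (PZ : probability Z R) (f : 'rV[R]_p -> Z -> R) (gamma alpha c : R).
Local Notation L := (exp_loss PZ f).
Local Notation risk := (reg_risk gamma alpha c f).

Lemma sqnorm_ge0 (w : 'rV[R]_p) : 0 <= sqnorm w.
Proof. by apply: sumr_ge0 => i _; exact: sqr_ge0. Qed.

Lemma stat_acc_ge0 (k : nat) : 0 <= gamma -> 0 <= stat_acc gamma alpha k.
Proof. by move=> gamma_ge0; rewrite divr_ge0 ?powR_ge0. Qed.

Lemma stat_acc_double (k : nat) : (0 < k)%N ->
  stat_acc gamma alpha k = 2 `^ alpha * stat_acc gamma alpha (2 * k).
Proof.
move=> k_gt0; rewrite /stat_acc natrM powRM //.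
have : 0 < (k%:R : R) `^ alpha by rewrite powR_gt0 // ltr0n.
have : 0 < (2 : R) `^ alpha by rewrite powR_gt0.
by move=> ? ?; field; rewrite !gt_eqF.
Qed.

Lemma warm_start_factor_gt0 (w : 'rV[R]_p) : 0 <= alpha -> 0 <= c ->
  0 < 3 * 2 `^ alpha + (2 `^ alpha - 1) * (2 + c / 2 * sqnorm w).
Proof.
move=> alpha_ge0 c_ge0; have a_ge1 : 1 <= 2 `^ alpha by rewrite powR_ge1 ?ler1n.
have : 0 <= (2 `^ alpha - 1) * (2 + c / 2 * sqnorm w).
  by rewrite mulr_ge0 ?subr_ge0 ?addr_ge0 ?mulr_ge0 ?divr_ge0 ?sqnorm_ge0.
lra.
Qed.

Lemma emp_loss_split (S T : {set 'I_N}) (D : 'I_N -> Z) (w : 'rV[R]_p) :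
  S \subset T -> #|T| = (2 * #|S|)%N ->
  emp_loss f T D w = (emp_loss f S D w + emp_loss f (T :\: S) D w) / 2.
Proof.
move=> ST cardT; rewrite /emp_loss cardT (card_setD_double ST cardT).
by rewrite (big_setID S) /= (finset.setIidPr ST) natrM invfM; ring.
Qed.

Lemma sup_dev_ge (S : {set 'I_N}) (D : 'I_N -> Z) (w : 'rV[R]_p) :
  (`|L w - emp_loss f S D w|%:E <= sup_dev PZ f S D)%E.
Proof. by apply: ereal_sup_ubound; exists w. Qed.

Lemma sup_dev_ge0 (S : {set 'I_N}) (D : 'I_N -> Z) : (0 <= sup_dev PZ f S D)%E.
Proof. exact: le_trans (sup_dev_ge S D 0). Qed.

Lemma reg_risk_warm_start_le (Sm Sn : {set 'I_N}) (D : 'I_N -> Z)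
    (wstar x y z : 'rV[R]_p) :
  0 <= gamma -> 0 <= alpha -> 0 <= c ->
  (0 < #|Sm|)%N -> Sm \subset Sn -> #|Sn| = (2 * #|Sm|)%N ->
  risk Sm D z <= risk Sm D y -> risk Sn D y <= risk Sn D wstar -> L wstar <= L y ->
  ((risk Sn D x - risk Sn D y)%:E <=
   (risk Sm D x - risk Sm D z)%:E
   + (sup_dev PZ f Sm D + sup_dev PZ f (Sn :\: Sm) D
      + (2 * (2 `^ alpha - 1))%:E * sup_dev PZ f Sn D)
   + ((2 `^ alpha - 1) * (c * stat_acc gamma alpha #|Sn| / 2 * sqnorm wstar))%:E)%E.
Proof.
move=> gamma_ge0 alpha_ge0 c_ge0 Sm_gt0 SmSn cardSn zmin ymin wstar_min.
set T := Sn :\: Sm; set a := 2 `^ alpha.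
set kappa := c * stat_acc gamma alpha #|Sn| / 2.
have kappa_ge0 : 0 <= kappa by rewrite !mulr_ge0 ?stat_acc_ge0.
have a_ge1 : 1 <= a by rewrite powR_ge1 ?ler1n.
have RnE w : risk Sn D w = (emp_loss f Sm D w + emp_loss f T D w) / 2 + kappa * sqnorm w.
  by rewrite /reg_risk -emp_loss_split.
have RmE w : risk Sm D w = emp_loss f Sm D w + a * kappa * sqnorm w.
  by rewrite /reg_risk /kappa /a cardSn (stat_acc_double _ Sm_gt0); ring.
(* The sup deviations may be infinite, so only the finitely many deviations that
   are used are gathered into real bounds. *)
pose A := Num.max `|L x - emp_loss f Sm D x| `|L y - emp_loss f Sm D y|.
pose B := Num.max `|L x - emp_loss f T D x| `|L y - emp_loss f T D y|.
pose C := Num.max `|L wstar - emp_loss f Sn D wstar| `|L y - emp_loss f Sn D y|.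
have max_ge (u v : R) : u <= Num.max u v /\ v <= Num.max u v.
  by rewrite !le_max !lexx orbT.
have Ln_dev w : `|L w - emp_loss f Sn D w| <= C ->
    `|L w - (emp_loss f Sm D w + emp_loss f T D w) / 2| <= C.
  by rewrite -emp_loss_split.
have gap := warm_start_gap kappa_ge0 a_ge1 sqnorm_ge0 RnE RmE x y z wstar A B C
  zmin ymin wstar_min (max_ge _ _).1 (max_ge _ _).2 (max_ge _ _).1 (max_ge _ _).2
  (Ln_dev _ (max_ge _ _).1) (Ln_dev _ (max_ge _ _).2).
apply: (@le_trans _ _ ((risk Sm D x - risk Sm D z) + (A + B + 2 * (a - 1) * C)
  + (a - 1) * (kappa * sqnorm wstar))%:E).
  by rewrite lee_fin; lra.
have [A_sup B_sup C_sup] : [/\ (A%:E <= sup_dev PZ f Sm D)%E,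
    (B%:E <= sup_dev PZ f T D)%E & (C%:E <= sup_dev PZ f Sn D)%E].
  by split; rewrite EFin_max ge_max !sup_dev_ge.
rewrite EFinD; apply: leeD => //; rewrite EFinD; apply: leeD => //.
rewrite EFinD; apply: leeD; first by rewrite EFinD; exact: leeD.
by rewrite EFinM; apply: lee_wpmul2l => //; rewrite lee_fin mulr_ge0 ?subr_ge0.
Qed.

End regularized_risk.

Section expected_warm_start.
Context {R : realType} {p : nat} {dZ : measure_display} {Z : measurableType dZ}.
Context {N : nat} {dO : measure_display} {Omega : measurableType dO}.
Variables (PZ : probability Z R) (f : 'rV[R]_p -> Z -> R) (gamma alpha c : R).
Variables (P : probability Omega R) (z : 'I_N -> Omega -> Z).
Variables (Sm Sn : {set 'I_N}) (wstar : 'rV[R]_p) (wm wmstar : Omega -> 'rV[R]_p).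
Local Notation V := (stat_acc gamma alpha).
Local Notation risk S o := (reg_risk gamma alpha c f S (sample z o)).
Local Notation dev S o := (sup_dev PZ f S (sample z o)).
Local Notation opt_gap o := (risk Sm o (wm o) - risk Sm o (wmstar o)).
Local Notation t := (2 `^ alpha - 1).
Local Notation dev_sum o := (dev Sm o + dev (Sn :\: Sm) o + (2 * t)%:E * dev Sn o)%E.
Local Notation reg_term := (t * (c * V #|Sn| / 2 * sqnorm wstar)).

Definition warm_start_bound (o : Omega) : \bar R :=
  ((opt_gap o)%:E + dev_sum o + reg_term%:E)%E.

Hypotheses (gamma_ge0 : 0 <= gamma) (alpha_ge0 : 0 <= alpha) (c_ge0 : 0 <= c).
Hypotheses (Sm_gt0 : (0 < #|Sm|)%N) (SmSn : Sm \subset Sn).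
Hypothesis cardSn : #|Sn| = (2 * #|Sm|)%N.
Hypothesis dev_int : forall S : {set 'I_N}, (0 < #|S|)%N ->
  measurable_fun [set: Omega] (fun o => dev S o) /\
  (\int[P]_o dev S o <= (V #|S|)%:E)%E.
Hypothesis wmstar_min : forall o, risk Sm o (wmstar o) <= risk Sm o (wm o).
Hypothesis measurable_opt_gap : measurable_fun [set: Omega] (fun o => (opt_gap o)%:E).
Hypothesis integral_opt_gap : (\int[P]_o (opt_gap o)%:E <= (V #|Sm|)%:E)%E.

Let t_ge0 : 0 <= t.
Proof. by rewrite subr_ge0 powR_ge1 ?ler1n. Qed.

Let reg_term_ge0 : 0 <= reg_term.
Proof. by rewrite !mulr_ge0 ?stat_acc_ge0 ?sqnorm_ge0. Qed.

Let opt_gap_ge0 o : (0 <= (opt_gap o)%:E)%E.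
Proof. by rewrite lee_fin subr_ge0. Qed.

Let dev_sum_ge0 o : (0 <= dev_sum o)%E.
Proof. by rewrite !adde_ge0 ?mule_ge0 ?sup_dev_ge0 // lee_fin mulr_ge0. Qed.

Let card_setD : #|Sn :\: Sm| = #|Sm|.
Proof. exact: card_setD_double. Qed.

Let dev_int_Sm := dev_int Sm Sm_gt0.
Let dev_int_setD := dev_int (Sn :\: Sm) ltac:(by rewrite card_setD).
Let dev_int_Sn := dev_int Sn ltac:(by rewrite cardSn muln_gt0).

Let measurable_dev_sum : measurable_fun [set: Omega] (fun o => dev_sum o).
Proof.
apply: emeasurable_funD; last exact: measurable_funeM dev_int_Sn.1.
exact: emeasurable_funD dev_int_Sm.1 dev_int_setD.1.
Qed.

Let integral_dev_sum :
  (\int[P]_o dev_sum o <= (V #|Sm| + V #|Sm| + 2 * t * V #|Sn|)%:E)%E.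
Proof.
move: dev_int_Sm dev_int_setD dev_int_Sn.
move=> [meas_Sm int_Sm] [meas_setD +] [meas_Sn int_Sn].
rewrite card_setD => int_setD.
rewrite [leRHS]EFinD; apply: ge0_integralD_le => //.
- by move=> o; rewrite adde_ge0 ?sup_dev_ge0.
- exact: emeasurable_funD.
- by move=> o; rewrite mule_ge0 ?sup_dev_ge0 // lee_fin mulr_ge0.
- exact: measurable_funeM.
- by rewrite EFinD; apply: ge0_integralD_le => // o; exact: sup_dev_ge0.
- rewrite [leRHS]EFinM; apply: ge0_integralZl_le => //; first by rewrite mulr_ge0.
  by move=> o; exact: sup_dev_ge0.
Qed.

Lemma warm_start_bound_ge0 o : (0 <= warm_start_bound o)%E.
Proof.
by rewrite /warm_start_bound adde_ge0 ?lee_fin // adde_ge0 ?opt_gap_ge0 ?dev_sum_ge0.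
Qed.

Lemma measurable_warm_start_bound : measurable_fun [set: Omega] warm_start_bound.
Proof. by do 2 apply: emeasurable_funD => //; exact: measurable_cst. Qed.

Lemma integral_warm_start_bound :
  (\int[P]_o warm_start_bound o <=
   ((3 * 2 `^ alpha + t * (2 + c / 2 * sqnorm wstar)) * V #|Sn|)%:E)%E.
Proof.
have -> : (3 * 2 `^ alpha + t * (2 + c / 2 * sqnorm wstar)) * V #|Sn| =
    V #|Sm| + (V #|Sm| + V #|Sm| + 2 * t * V #|Sn|) + reg_term.
  by rewrite (stat_acc_double gamma alpha _ Sm_gt0) -cardSn; ring.
rewrite [leRHS]EFinD; apply: ge0_integralD_le.
- by move=> o; rewrite adde_ge0 ?opt_gap_ge0 ?dev_sum_ge0.
- exact: emeasurable_funD measurable_opt_gap measurable_dev_sum.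
- by move=> o; rewrite lee_fin.
- exact: measurable_cst.
- by rewrite [leRHS]EFinD; apply: ge0_integralD_le.
- by rewrite integral_cst // [X in (_ * X)%E]probability_setT mule1.
Qed.

End expected_warm_start.

Theorem theorem2 (R : realType) (p : nat)
  (dZ : measure_display) (Z : measurableType dZ) (PZ : probability Z R)
  (f : 'rV[R]_p -> Z -> R) (M gamma alpha c : R)
  (dO : measure_display) (Omega : measurableType dO) (P : probability Omega R)
  (N : nat) (z : 'I_N -> Omega -> Z)
  (m n : nat) (Sm Sn : {set 'I_N}) (wstar : 'rV[R]_p)
  (wmstar wnstar wm : Omega -> 'rV[R]_p)
  (dX : measure_display) (Xi : measurableType dX) (Q : probability Xi R)
  (meth : Omega -> 'rV[R]_p -> nat -> Xi -> 'rV[R]_p)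
  (rho : R) (s_n : nat) :
  (* loss assumptions *)
  (forall x : Z, convex_fun (fun w => f w x)) ->
  (forall x : Z, lipschitz_grad M (fun w => f w x)) ->
  (forall w, PZ.-integrable [set: Z] (fun x => (f w x)%:E)) ->
  (* statistical accuracy *)
  0 < gamma -> 1 / 2 <= alpha <= 1 -> 0 < c ->
  (forall S : {set 'I_N}, (0 < #|S|)%N ->
     measurable_fun [set: Omega] ((fun o => sup_dev PZ f S (sample z o)) : Omega -> \bar R) /\
     (\int[P]_o sup_dev PZ f S (sample z o) <= (stat_acc gamma alpha #|S|)%:E)%E) ->
  (* w* minimizes the expected loss *)
  (forall w, exp_loss PZ f wstar <= exp_loss PZ f w) ->
  (* nested subsets *)
  (1 <= m)%N -> n = (2 * m)%N -> #|Sm| = m -> #|Sn| = n -> Sm \subset Sn ->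
  (* minimizers of the regularized risks *)
  (forall o w, reg_risk gamma alpha c f Sm (sample z o) (wmstar o)
               <= reg_risk gamma alpha c f Sm (sample z o) w) ->
  (forall o w, reg_risk gamma alpha c f Sn (sample z o) (wnstar o)
               <= reg_risk gamma alpha c f Sn (sample z o) w) ->
  (* w_m solves R_m to within V_m in expectation *)
  measurable_fun [set: Omega] (fun o =>
     (reg_risk gamma alpha c f Sm (sample z o) (wm o)
      - reg_risk gamma alpha c f Sm (sample z o) (wmstar o))%:E) ->
  (\int[P]_o (reg_risk gamma alpha c f Sm (sample z o) (wm o)
              - reg_risk gamma alpha c f Sm (sample z o) (wmstar o))%:E
     <= (stat_acc gamma alpha m)%:E)%E ->
  (* linear convergence of the method on R_n *)
  0 <= rho < 1 ->
  (forall o (u0 : 'rV[R]_p) (s : nat),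
     (\int[Q]_x (reg_risk gamma alpha c f Sn (sample z o) (meth o u0 s x)
                 - reg_risk gamma alpha c f Sn (sample z o) (wnstar o))%:E
      <= (rho ^+ s * (reg_risk gamma alpha c f Sn (sample z o) u0
                      - reg_risk gamma alpha c f Sn (sample z o) (wnstar o)))%:E)%E) ->
  (* number of iterations *)
  (0 < s_n)%N ->
  - ln (3 * 2 `^ alpha + (2 `^ alpha - 1) * (2 + c / 2 * sqnorm wstar)) / ln rho
    <= s_n%:R ->
  (\int[P]_o \int[Q]_x
     (reg_risk gamma alpha c f Sn (sample z o) (meth o (wm o) s_n x)
      - reg_risk gamma alpha c f Sn (sample z o) (wnstar o))%:E
   <= (stat_acc gamma alpha n)%:E)%E.
Proof.
(* Convexity and smoothness of the loss only serve, in the paper, to make the method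
   linearly convergent; that rate is assumed here directly. *)
move=> _ _ _ gamma_gt0 /andP[alpha_ge _] c_gt0 dev_int wstar_min m_gt0 -> card_Sm card_Sn
  SmSn wm_opt wn_opt gap_meas gap_int rho01 meth_rate s_gt0 s_ge.
have [gamma_ge0 alpha_ge0 c_ge0] : [/\ 0 <= gamma, 0 <= alpha & 0 <= c] by split; lra.
have [rho_ge0 _] := andP rho01.
have Sm_gt0 : (0 < #|Sm|)%N by rewrite card_Sm.
have cardSn : #|Sn| = (2 * #|Sm|)%N by rewrite card_Sn card_Sm.
have wmstar_min o : reg_risk gamma alpha c f Sm (sample z o) (wmstar o)
    <= reg_risk gamma alpha c f Sm (sample z o) (wm o) by exact: wm_opt.
pose B := warm_start_bound PZ f gamma alpha c z Sm Sn wstar wm wmstar.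
pose K := 3 * 2 `^ alpha + (2 `^ alpha - 1) * (2 + c / 2 * sqnorm wstar).
have gap_le o : ((reg_risk gamma alpha c f Sn (sample z o) (wm o)
    - reg_risk gamma alpha c f Sn (sample z o) (wnstar o))%:E <= B o)%E.
  by apply: reg_risk_warm_start_le; rewrite ?wm_opt ?wn_opt ?wstar_min.
have B_ge0 o : (0 <= B o)%E by exact: warm_start_bound_ge0.
have B_meas : measurable_fun [set: Omega] B.
  by apply: (measurable_warm_start_bound PZ f gamma alpha c P).
have B_int : (\int[P]_o B o <= (K * stat_acc gamma alpha #|Sn|)%:E)%E.
  by apply: integral_warm_start_bound => //; rewrite card_Sm.
apply: (@le_trans _ _ (\int[P]_o ((rho ^+ s_n)%:E * B o))%E).
  apply: ge0_le_integralT => o.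
    by apply: integral_ge0 => x _; rewrite lee_fin subr_ge0.
  apply: le_trans (meth_rate o (wm o) s_n) _.
  by rewrite EFinM; apply: lee_wpmul2l (gap_le o); rewrite lee_fin exprn_ge0.
rewrite ge0_integralZl ?lee_fin ?exprn_ge0 //.
apply: le_trans (lee_wpmul2l _ B_int) _; first by rewrite lee_fin exprn_ge0.
rewrite -EFinM lee_fin card_Sn mulrA -[leRHS]mul1r ler_wpM2r ?stat_acc_ge0 //.
exact: expr_mul_le1 rho01 s_gt0 (warm_start_factor_gt0 _ _ _ alpha_ge0 c_ge0) s_ge.
Qed.
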